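(* Let $R$ be a valuation domain of cardinality $\aleph_1$, $J/R$ a type with $J=\bigcup_{\sigma<\omega_1} r_\sigma^{-1}R$ as in the context, and $U$ a uniserial $R$-module of type $J/R$. If $U$ has a special family of functions, then $U$ is non-standard.
   Context: A valuation domain is an integral domain whose ideals are linearly ordered; $Q$ is its quotient field ($Q\neq R$). A module is uniserial if its submodules are linearly ordered by inclusion. A uniserial $R$-module is standard if it is isomorphic to $J'/A$ for $R$-submodules $A\subseteq J'$ of $Q$, and non-standard otherwise. For a uniserial $U$ and $0\neq a\in U$, let $\mathrm{Ann}(a)=\{r\in R: ra=0\}$ and $D(a)=\bigcup\{r^{-1}R: a\in rU\}$; $U$ has type $J/A$ if $J/A\cong D(a)/\mathrm{Ann}(a)$ (independent of $a$). A type $J/R$: $J$ is an $R$-submodule of $Q$ with $R\subseteq J$, written $J=\bigcup_{\sigma<\omega_1} r_\sigma^{-1}R$ with nonzero $r_\sigma\in R$ such that $r_\tau\mid r_\sigma$ for $\tau<\sigma$. Special family: for $U$ of type $J/R$, fix for each $\sigma<\omega_1$ an element $a_\sigma\in U$ with $\mathrm{Ann}(a_\sigma)=r_\sigma R$, and let $I_\sigma$ be the set of all $R$-module isomorphisms $a_\sigma R\to r_\sigma^{-1}R/R$. A family $\{f_\sigma:\sigma<\omega_1\}$ of functions $f_\sigma: I_\sigma\to\mathbb{Q}$ is a special family of functions for $U$ if whenever $\sigma<\rho$, $\varphi\in I_\rho$, $\psi\in I_\sigma$ and $\varphi$ extends $\psi$ (note $a_\sigma R\subseteq a_\rho R$ and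 $r_\sigma^{-1}R/R\subseteq r_\rho^{-1}R/R$), then $f_\sigma(\psi)<f_\rho(\varphi)$. $U$ is called explicitly non-standard if it has a special family of functions. *)

From HB Require Import structures.
From mathcomp Require Import all_boot all_order all_algebra.
Set Implicit Arguments. Unset Strict Implicit. Unset Printing Implicit Defensive.
Import Order.TTheory GRing.Theory Num.Theory.
Local Open Scope ring_scope.

Definition countable_type (T : Type) : Prop := exists f : T -> nat, injective f.

Definition is_omega1 (I : Type) (lt : I -> I -> Prop) : Prop :=
  [/\ (forall x, ~ lt x x),
      (forall x y z, lt x y -> lt y z -> lt x z),
      (forall x y, lt x y \/ x = y \/ lt y x) &
      well_founded lt] /\
  (~ countable_type I /\
   (forall s : I, countable_type {t : I | lt t s})).

Section Defs.
Variable R : idomainType.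
Local Notation Q := {fraction R}.
Local Notation "x %:F" := (@tofrac R x).

Definition is_ideal (P : R -> Prop) : Prop :=
  [/\ P 0, (forall x y, P x -> P y -> P (x + y)) & (forall c x, P x -> P (c * x))].

Definition valuation_domain : Prop :=
  (forall I1 I2 : R -> Prop, is_ideal I1 -> is_ideal I2 ->
      (forall x, I1 x -> I2 x) \/ (forall x, I2 x -> I1 x)) /\
  (exists q : Q, forall s : R, q <> s%:F).

Definition subQ (S : Q -> Prop) : Prop :=
  [/\ S 0, (forall x y, S x -> S y -> S (x + y)) & (forall (c : R) x, S x -> S (c%:F * x))].

Definition Rset : Q -> Prop := fun q => exists s : R, q = s%:F.
Definition invR (r : R) : Q -> Prop := fun q => exists s : R, q = s%:F / r%:F.

Definition cls (A : Q -> Prop) (x : Q) : Q -> Prop := fun y => A (y - x).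

(* the quotient module J'/A, elements are the cosets x + A with x in J' *)
Definition quotT (J' A : Q -> Prop) : Type :=
  {C : Q -> Prop | exists x, J' x /\ C = cls A x}.

Definition qadd (A : Q -> Prop) (C D : Q -> Prop) : Q -> Prop :=
  fun z => exists x y, [/\ C x, D y & A (z - (x + y))].
Definition qscale (A : Q -> Prop) (c : R) (C : Q -> Prop) : Q -> Prop :=
  fun z => exists x, C x /\ A (z - c%:F * x).

Definition quot_iso (J1 A1 J2 A2 : Q -> Prop) : Prop :=
  exists g : quotT J1 A1 -> quotT J2 A2,
  [/\ bijective g,
      (forall c d e : quotT J1 A1, sval e = qadd A1 (sval c) (sval d) ->
          sval (g e) = qadd A2 (sval (g c)) (sval (g d))) &
      (forall (s : R) (c e : quotT J1 A1), sval e = qscale A1 s (sval c) ->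
          sval (g e) = qscale A2 s (sval (g c)))].

Variable U : lmodType R.

Definition submod (S : U -> Prop) : Prop :=
  [/\ S 0, (forall x y, S x -> S y -> S (x + y)) & (forall (c : R) x, S x -> S (c *: x))].

Definition uniserial : Prop :=
  forall S T : U -> Prop, submod S -> submod T ->
    (forall x, S x -> T x) \/ (forall x, T x -> S x).

Definition standard : Prop :=
  exists J' A : Q -> Prop, [/\ subQ J', subQ A, (forall x, A x -> J' x) &
    exists g : U -> quotT J' A,
    [/\ bijective g,
        (forall u v, sval (g (u + v)) = qadd A (sval (g u)) (sval (g v))) &
        (forall (s : R) u, sval (g (s *: u)) = qscale A s (sval (g u)))]].

Definition non_standard : Prop := ~ standard.

Definition AnnQ (a : U) : Q -> Prop := fun q => exists s : R, q = s%:F /\ s *: a = 0.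
Definition Dset (a : U) : Q -> Prop :=
  fun q => exists r : R, [/\ r != 0, (exists u : U, a = r *: u) & invR r q].

(* U has type J/A (witnessed at some a <> 0; independent of a) *)
Definition has_type (J A : Q -> Prop) : Prop :=
  exists a : U, a != 0 /\ quot_iso J A (Dset a) (AnnQ a).

Definition cycl (a : U) : U -> Prop := fun u => exists s : R, u = s *: a.

Definition is_iso_cyc (a : U) (r : R)
    (phi : {u : U | cycl a u} -> quotT (invR r) Rset) : Prop :=
  [/\ bijective phi,
      (forall u v w : {u : U | cycl a u}, sval w = sval u + sval v ->
          sval (phi w) = qadd Rset (sval (phi u)) (sval (phi v))) &
      (forall (s : R) (u w : {u : U | cycl a u}), sval w = s *: sval u ->
          sval (phi w) = qscale Rset s (sval (phi u)))].

Definition Iso_set (a : U) (r : R) : Type :=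
  {phi : {u : U | cycl a u} -> quotT (invR r) Rset | is_iso_cyc phi}.

Definition extends (a a' : U) (r r' : R)
    (phi : Iso_set a' r') (psi : Iso_set a r) : Prop :=
  forall (u : {u : U | cycl a u}) (u' : {u : U | cycl a' u}),
    sval u = sval u' -> sval (sval phi u') = sval (sval psi u).

Definition special_family (I : Type) (lt : I -> I -> Prop) (r : I -> R) (a : I -> U)
    (f : forall s : I, Iso_set (a s) (r s) -> rat) : Prop :=
  forall (sg rho : I), lt sg rho ->
    forall (phi : Iso_set (a rho) (r rho)) (psi : Iso_set (a sg) (r sg)),
      extends phi psi -> f sg psi < f rho phi.

End Defs.

Definition Jtype (R : idomainType) (I : Type) (r : I -> R) : {fraction R} -> Prop :=
  fun q => exists s : I, invR (r s) q.

From mathcomp Require Import all_boot all_order all_algebra generic_quotient.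
From mathcomp Require Import ring.
From Stdlib Require Import FunctionalExtensionality PropExtensionality ProofIrrelevance ClassicalEpsilon Classical.
Set Implicit Arguments. Unset Strict Implicit. Unset Printing Implicit Defensive.
Import Order.TTheory GRing.Theory Num.Theory.
Local Open Scope ring_scope.

(* Suppose [U] is standard, say [U ~= J'/A]; choosing representatives gives
   [rho : U -> Q] inducing an embedding [U -> Q/A].  For a non-unit [r_s],
   [Ann(a_s) = r_s R] forces [A = t R] with [t = r_s rho(a_s)] (here the
   valuation property is used), so [rho / t] induces an embedding [U -> Q/R].
   Its restrictions to the cyclic submodules [a_s R] are isomorphisms onto
   [r_s^-1 R / R] which extend one another, so a special family would give a
   strictly increasing map from [omega_1] into the countable set [rat].  If all
   [r_s] are units, every [a_s] vanishes and the zero map plays the role of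
   [rho]. *)

Local Notation "x %:F" := (@tofrac _ x).

Lemma predext (T : Type) (P Q : T -> Prop) : (forall z, P z <-> Q z) -> P = Q.
Proof.
by move=> PQ; apply: functional_extensionality => z; apply: propositional_extensionality.
Qed.

Lemma sval_inj (T : Type) (P : T -> Prop) : injective (@sval T P).
Proof. by case=> [x px] [y py] /= exy; subst y; rewrite (proof_irrelevance _ px py). Qed.

Lemma inj_surj_bij (A B : Type) (f : A -> B) :
  injective f -> (forall y, exists x, f x = y) -> bijective f.
Proof.
move=> f_inj f_surj.
pose g y := sval (constructive_indefinite_description _ (f_surj y)).
have gK y : f (g y) = y by rewrite /g; case: constructive_indefinite_description.
by exists g => [x|y]; [apply: f_inj; rewrite gK | exact: gK].
Qed.

Lemma omega1_no_increasing_rat (I : Type) (lt : I -> I -> Prop) (f : I -> rat) :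
  is_omega1 lt -> ~ (forall x y, lt x y -> f x < f y).
Proof.
case=> [[_ _ lt_total _] [uncountable _]] f_incr; apply: uncountable.
exists (fun x => pickle (f x)) => x y /(pcan_inj (@pickleK _)) fxy.
have [lxy|[//|lyx]] := lt_total x y.
- by move: (f_incr _ _ lxy); rewrite fxy ltxx.
- by move: (f_incr _ _ lyx); rewrite fxy ltxx.
Qed.

Section Fractions.
Variable R : idomainType.
Local Notation Q := {fraction R}.

Lemma tofrac_ratio (x : Q) : exists n d : R, d != 0 /\ x = n%:F / d%:F.
Proof.
elim/quotW: x => y; exists y.1, y.2; split; first exact: denom_ratioP.
unlock tofrac; rewrite -[_^-1]FracField.pi_inv -[_ * _]FracField.pi_mul.
congr (\pi%qT _).
rewrite /FracField.mulf /FracField.invf /= !numden_Ratio ?oner_neq0 ?denom_ratioP //.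
by rewrite mulr1 mul1r Ratio_numden.
Qed.

Section SubQ.
Variable A : Q -> Prop.
Hypothesis hA : subQ A.

Lemma subQ0 : A 0. Proof. by case: hA. Qed.

Lemma subQD x y : A x -> A y -> A (x + y). Proof. by case: hA => _ + _; apply. Qed.

Lemma subQZ (c : R) x : A x -> A (c%:F * x). Proof. by case: hA => _ _; apply. Qed.

Lemma subQN x : A x -> A (- x).
Proof. by move=> /(subQZ (-1)); rewrite tofracN tofrac1 mulN1r. Qed.

Lemma subQB x y : A x -> A y -> A (x - y).
Proof. by move=> Ax /subQN; apply: subQD. Qed.

Lemma cls_eq x y : cls A x = cls A y <-> A (x - y).
Proof.
split=> [clsE | Axy].
  have : cls A x x by rewrite /cls subrr; exact: subQ0.
  by rewrite clsE.
apply: predext => z; rewrite /cls; split=> Az.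
- have -> : z - y = (z - x) + (x - y) by ring.
  exact: subQD.
- have -> : z - x = (z - y) - (x - y) by ring.
  exact: subQB.
Qed.

Lemma qadd_cls x y : qadd A (cls A x) (cls A y) = cls A (x + y).
Proof.
apply: predext => z; rewrite /qadd /cls; split=> [[x' [y' [Ax' Ay' Az]]] | Az].
- have -> : z - (x + y) = (z - (x' + y')) + ((x' - x) + (y' - y)) by ring.
  by apply: subQD => //; apply: subQD.
- by exists x, y; split; rewrite ?subrr //; exact: subQ0.
Qed.

Lemma qscale_cls (s : R) x : qscale A s (cls A x) = cls A (s%:F * x).
Proof.
apply: predext => z; rewrite /qscale /cls; split=> [[x' [Ax' Az]] | Az].
- have -> : z - s%:F * x = (z - s%:F * x') + s%:F * (x' - x) by ring.
  by apply: subQD => //; apply: subQZ.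
- by exists x; split; rewrite ?subrr //; exact: subQ0.
Qed.

End SubQ.

Lemma subQ_Rset : subQ (@Rset R).
Proof.
split; first by exists 0; rewrite tofrac0.
- by move=> _ _ [x ->] [y ->]; exists (x + y); rewrite tofracD.
- by move=> c _ [x ->]; exists (c * x); rewrite tofracM.
Qed.

Lemma Rset_tofrac (x : R) : Rset x%:F. Proof. by exists x. Qed.

Lemma is_ideal_principal (x : R) : is_ideal (fun z => exists c, z = x * c).
Proof.
split; first by exists 0; rewrite mulr0.
- by move=> _ _ [c ->] [d ->]; exists (c + d); rewrite mulrDr.
- by move=> c _ [d ->]; exists (c * d); rewrite mulrCA.
Qed.

Hypothesis hval : valuation_domain R.

Lemma valuation_dvd_total (x y : R) : (exists c, x = y * c) \/ (exists c, y = x * c).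
Proof.
case: hval => ideals_total _.
have [xRy|yRx] := ideals_total _ _ (is_ideal_principal x) (is_ideal_principal y).
- by left; apply: xRy; exists 1; rewrite mulr1.
- by right; apply: yRx; exists 1; rewrite mulr1.
Qed.

Lemma valuation_frac_or_inv (x : Q) : Rset x \/ exists k : R, x * k%:F = 1.
Proof.
have [n [d [d0 ->]]] := tofrac_ratio x.
have dF0 : d%:F != 0 by rewrite tofrac_eq0.
have [[k ->]|[k dE]] := valuation_dvd_total n d.
  by left; exists k; rewrite tofracM mulrC mulKf.
have [->|n0] := eqVneq n 0; first by left; exists 0; rewrite tofrac0 mul0r.
have nF0 : n%:F != 0 by rewrite tofrac_eq0.
right; exists k; rewrite dE tofracM invfM mulrA divff // mul1r mulVf //.
by apply: contraNneq dF0 => k0; rewrite dE tofracM k0 mulr0.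
Qed.

End Fractions.

Section Lifts.
Variables (R : idomainType) (U : lmodType R).
Local Notation Q := {fraction R}.

Definition lifts_hom (A : Q -> Prop) (rho : U -> Q) : Prop :=
  (forall u v, A (rho (u + v) - (rho u + rho v))) /\
  (forall (s : R) u, A (rho (s *: u) - s%:F * rho u)).

Definition lifts_inj_on (A : Q -> Prop) (rho : U -> Q) (S : U -> Prop) : Prop :=
  forall u v, S u -> S v -> A (rho u - rho v) -> u = v.

Lemma standard_lift : standard U ->
  exists A rho, [/\ subQ A, lifts_hom A rho & forall S, lifts_inj_on A rho S].
Proof.
case=> J' [A [_ hA _ [g [g_bij g_add g_scale]]]].
pose rep u := sval (constructive_indefinite_description _ (svalP (g u))).
have repE u : sval (g u) = cls A (rep u).
  by rewrite /rep; case: constructive_indefinite_description => x [].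
exists A, rep; split=> //; first split=> [u v|s u].
- by apply/(cls_eq hA); rewrite -(qadd_cls hA) -!repE g_add.
- by apply/(cls_eq hA); rewrite -(qscale_cls hA) -!repE g_scale.
- move=> S u v _ _ /(cls_eq hA) repuv.
  by apply: (bij_inj g_bij); apply: sval_inj; rewrite !repE.
Qed.

Lemma lifts_hom_div (A : Q -> Prop) (rho : U -> Q) (t : Q) :
  (forall x, A x <-> Rset (x / t)) -> lifts_hom A rho ->
  lifts_hom (@Rset R) (fun u => rho u / t).
Proof.
move=> At [rho_add rho_scale]; split=> [u v|s u].
- by rewrite -mulrDl -mulrBl; apply/At.
- by rewrite mulrA -mulrBl; apply/At.
Qed.

Lemma lifts_inj_on_div (A : Q -> Prop) (rho : U -> Q) (S : U -> Prop) (t : Q) :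
  (forall x, A x <-> Rset (x / t)) -> lifts_inj_on A rho S ->
  lifts_inj_on (@Rset R) (fun u => rho u / t) S.
Proof. by move=> At rho_inj u v Su Sv; rewrite -mulrBl => /At; apply: rho_inj. Qed.

Section Annihilator.
Variables (A : Q -> Prop) (rho : U -> Q).
Hypotheses (hA : subQ A) (rho_hom : lifts_hom A rho).

Lemma lift0 : A (rho 0).
Proof. by have := rho_hom.2 0 0; rewrite scale0r tofrac0 mul0r subr0. Qed.

Lemma lift_ann (s : R) u : s *: u = 0 -> A (s%:F * rho u).
Proof.
by move=> su0; have := subQB hA lift0 (rho_hom.2 s u); rewrite su0 subKr.
Qed.

Lemma lift_annP (a : U) (s : R) :
  lifts_inj_on A rho (cycl a) -> s *: a = 0 <-> A (s%:F * rho a).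
Proof.
move=> rho_inj; split; first exact: lift_ann.
move=> As; apply: rho_inj; [by exists s | by exists 0; rewrite scale0r |].
by have := subQB hA (subQD hA (rho_hom.2 s a) As) lift0; rewrite subrK.
Qed.

(* [Ann(a) = rR] with [r] a non-unit pins down [A] as the principal submodule
   generated by [r rho(a)], because [R] is a valuation domain. *)
Lemma lift_ideal_principal (a : U) (r : R) :
  valuation_domain R -> r != 0 -> ~ (exists c, 1 = r * c) ->
  lifts_inj_on A rho (cycl a) -> (forall x : R, x *: a = 0 <-> exists c, x = r * c) ->
  forall x, A x <-> Rset (x / (r%:F * rho a)).
Proof.
move=> hval r0 r_nonunit rho_inj ann_a.
have annA s : A (s%:F * rho a) <-> exists c, s = r * c.
  exact: iff_trans (iff_sym (lift_annP s rho_inj)) (ann_a s).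
have At : A (r%:F * rho a) by apply/annA; exists 1; rewrite mulr1.
have not_Aa : ~ A (rho a).
  by move=> Aa; apply: r_nonunit; apply/annA; rewrite tofrac1 mul1r.
have rF0 : r%:F != 0 by rewrite tofrac_eq0.
have t0 : r%:F * rho a != 0.
  by rewrite mulf_neq0 //; apply: contra_not_neq not_Aa => ->; exact: subQ0.
move=> x; split=> [Ax|[e xE]]; last by rewrite -(divfK t0 x) xE; exact: subQZ.
have [//|[k xk1]] := valuation_frac_or_inv hval (x / (r%:F * rho a)).
have xkE : x * k%:F = r%:F * rho a by rewrite -[RHS]mul1r -xk1 mulrAC divfK.
have [[m kE]|[m rE]] := valuation_dvd_total hval k r.
  exfalso; apply: not_Aa.
  suff -> : rho a = m%:F * x by exact: subQZ.
  by apply: (mulfI rF0); rewrite -xkE kE tofracM; ring.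
have k0 : k != 0 by apply: contraNneq r0 => k0; rewrite rE k0 mul0r.
have m0 : m != 0 by apply: contraNneq r0 => m0; rewrite rE m0 mulr0.
have [j mE] : exists j, m = r * j.
  apply/annA; suff -> : m%:F * rho a = x by [].
  have kF0 : k%:F != 0 by rewrite tofrac_eq0.
  by apply: (mulfI kF0); rewrite mulrA -tofracM -rE -xkE mulrC.
have kj1 : k * j = 1 by apply: (mulfI m0); rewrite mulr1 {2}mE rE mulrCA mulrA.
by exists j; rewrite -[LHS]mulr1 -tofrac1 -kj1 tofracM mulrA xk1 mul1r.
Qed.

End Annihilator.

Section CyclicIso.
Variables (rho : U -> Q) (a : U) (r : R).
Hypotheses (hval : valuation_domain R) (rho_hom : lifts_hom (@Rset R) rho).
Hypotheses (rho_inj : lifts_inj_on (@Rset R) rho (cycl a)) (r0 : r != 0).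
Hypothesis ann_a : forall x : R, x *: a = 0 <-> exists c, x = r * c.

Let subQR := subQ_Rset R.
Let rF0 : r%:F != 0. Proof. by rewrite tofrac_eq0. Qed.

Let annR (s : R) : s *: a = 0 <-> Rset (s%:F * rho a).
Proof. exact: lift_annP. Qed.

Lemma lift_inv_generator : exists m : R, Rset (m%:F * rho a - r%:F^-1).
Proof.
have [Ra|[k ak1]] := valuation_frac_or_inv hval (rho a).
  have [c rc] : exists c, 1 = r * c by apply/ann_a/annR; rewrite tofrac1 mul1r.
  have rV : r%:F^-1 = c%:F by apply: (mulfI rF0); rewrite divff // -tofracM -rc tofrac1.
  by exists c; rewrite rV; apply: subQB => //; [apply: subQZ | exact: Rset_tofrac].
have [m kE] : exists m, k = r * m.
  by apply/ann_a/annR; rewrite mulrC ak1 -tofrac1; exact: Rset_tofrac.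
exists m; suff -> : m%:F * rho a = r%:F^-1 by rewrite subrr; exact: subQ0.
by apply: (mulfI rF0); rewrite divff // mulrA -tofracM -kE mulrC ak1.
Qed.

Lemma cyclic_coset_invR (w : {u : U | cycl a u}) :
  exists x, invR r x /\ cls (@Rset R) (rho (sval w)) = cls (@Rset R) x.
Proof.
exists (rho (sval w)); split=> //.
have [e reE] : Rset (r%:F * rho (sval w)).
  apply: (lift_ann subQR rho_hom); case: w => u [s uE] /=; rewrite uE.
  by rewrite scalerA mulrC -scalerA (proj2 (ann_a r)) ?scaler0 //; exists 1; rewrite mulr1.
by exists e; rewrite -reE [_ * rho _]mulrC mulfK.
Qed.

Definition cyclic_iso (w : {u : U | cycl a u}) : quotT (invR r) (@Rset R) :=
  exist _ _ (cyclic_coset_invR w).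

Lemma cyclic_iso_surj (C : quotT (invR r) (@Rset R)) : exists w, cyclic_iso w = C.
Proof.
case: C => C [x [[e xE] CE]]; have [m gen] := lift_inv_generator.
exists (exist _ ((e * m) *: a) (ex_intro _ (e * m) erefl)); apply: sval_inj => /=.
rewrite CE xE; apply/(cls_eq subQR).
have -> : rho ((e * m) *: a) - e%:F / r%:F =
          (rho ((e * m) *: a) - (e * m)%:F * rho a) + e%:F * (m%:F * rho a - r%:F^-1).
  by rewrite tofracM; ring.
by apply: subQD => //; [exact: rho_hom.2 | exact: subQZ].
Qed.

Lemma cyclic_iso_is_iso : is_iso_cyc cyclic_iso.
Proof.
split.
- apply: inj_surj_bij cyclic_iso_surj => w1 w2 /(congr1 sval) /(cls_eq subQR) ww.
  by apply: sval_inj; apply: rho_inj ww; exact: svalP.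
- by move=> u v w /= ->; rewrite (qadd_cls subQR); apply/(cls_eq subQR); exact: rho_hom.1.
- by move=> s u w /= ->; rewrite (qscale_cls subQR); apply/(cls_eq subQR); exact: rho_hom.2.
Qed.

Definition cyclic_isoI : Iso_set a r := exist _ cyclic_iso cyclic_iso_is_iso.

End CyclicIso.
End Lifts.

Lemma lift_no_special_family (R : idomainType) (hval : valuation_domain R)
  (I : Type) (lt : I -> I -> Prop) (hI : is_omega1 lt)
  (r : I -> R) (hr0 : forall s : I, r s != 0) (U : lmodType R) (a : I -> U)
  (ha : forall (s : I) (x : R), x *: a s = 0 <-> exists c : R, x = r s * c)
  (rho : U -> {fraction R}) (rho_hom : lifts_hom (@Rset R) rho)
  (rho_inj : forall s, lifts_inj_on (@Rset R) rho (cycl (a s))) :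
  ~ exists f : forall s : I, Iso_set (a s) (r s) -> rat, special_family lt f.
Proof.
case=> f f_special; pose phi s := cyclic_isoI hval rho_hom (rho_inj s) (hr0 s) (ha s).
apply: (omega1_no_increasing_rat (f := fun s => f s (phi s)) hI) => s t lst.
by apply: f_special lst _ _ _ => u u' /= ->.
Qed.

Theorem mainTheorem6
  (R : idomainType) (hval : valuation_domain R)
  (I : Type) (lt : I -> I -> Prop) (hI : is_omega1 lt)
  (hcard : exists h : R -> I, bijective h)
  (r : I -> R) (hr0 : forall s : I, r s != 0)
  (hdiv : forall t s : I, lt t s -> exists c : R, r s = r t * c)
  (U : lmodType R) (huni : uniserial U)
  (htype : has_type U (Jtype r) (@Rset R))
  (a : I -> U) (ha : forall (s : I) (x : R), x *: a s = 0 <-> exists c : R, x = r s * c)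
  (hspec : exists f : forall s : I, Iso_set (a s) (r s) -> rat,
             special_family lt f) :
  non_standard U.
Proof.
case: (classic (exists s0, ~ exists c, 1 = r s0 * c)) => [[s0 r_nonunit]|]; last first.
  move=> /not_ex_not_all r_unit _.
  have a0 s : a s = 0 by rewrite -[a s]scale1r; apply/ha; exact: r_unit.
  apply: (lift_no_special_family hval hI hr0 ha (rho := fun _ => 0) _ _ hspec).
    by split=> *; rewrite ?addr0 ?mulr0 subrr; exact: subQ0 (subQ_Rset R).
  by move=> s u v [x ->] [y ->] _; rewrite a0 !scaler0.
move=> /standard_lift [A [rho [hA rho_hom rho_inj]]].
have At := lift_ideal_principal hA rho_hom hval (hr0 s0) r_nonunit
  (rho_inj _) (ha s0).
apply: (lift_no_special_family hval hI hr0 ha _ _ hspec).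
- exact: lifts_hom_div At rho_hom.
- by move=> s; apply: lifts_inj_on_div At (rho_inj _).
Qed.
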